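(* Let $(E,\mathcal{E},\nu)$ be a $\sigma$-finite measure space, $\phi$ a Young function satisfying the $\Delta_2$-condition, $w$ a weight function, and $\Psi:E\to E$ a non-singular measurable transformation inducing the composition operator $C_\Psi f=f\circ\Psi$ on the Orlicz-Lorentz space $L_{(\phi,w)}$. If the Radon–Nikodym derivative $f_\Psi=\frac{d(\nu\circ\Psi^{-1})}{d\nu}$ is bounded away from zero on its support and $\Psi^{-1}(\mathcal{E})=\mathcal{E}$, then $\mathcal{D}(C_\Psi)=0$.
   Context: A Young function is a convex $\phi:[0,\infty)\to[0,\infty)$ with $\phi(x)=0\iff x=0$ and $\lim_{x\to\infty}\phi(x)=\infty$; $\Delta_2$-condition: $\phi(2x)\le k\phi(x)$ for some $k>0$ and all $x>0$. A weight function is a non-increasing locally integrable $w:(0,\infty)\to(0,\infty)$ with $\int_0^\infty w=\infty$. For measurable $f$, $\nu_f(s)=\nu\{|f|>s\}$, $f^*(t)=\inf\{s>0:\nu_f(s)\le t\}$; $L_{(\phi,w)}$ is the space of measurable $f:E\to\mathbb{C}$ with $\int_0^\infty\phi(\alpha f^*(t))w(t)\,dt<\infty$ for some $\alpha>0$, with the Luxemburg norm. $\Psi$ non-singular: $\nu(\Psi^{-1}(S))=0$ whenever $\nu(S)=0$. A function $h$ is bounded away from zero on its support if there is $\epsilon>0$ with $h(x)\ge\epsilon$ for almost all $x\in\{h\neq0\}$. $\Psi^{-1}(\mathcal{E})=\{\Psi^{-1}(S):S\in\mathcal{E}\}$. The descent $\mathcal{D}(T)$ is the smallest non-negative integer $m$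 with $\mathcal{R}(T^{m+1})=\mathcal{R}(T^m)$ ($\mathcal{R}$ = range, $T^0=I$), and $\infty$ if none exists. *)

From HB Require Import structures.
From mathcomp Require Import all_boot all_order all_algebra.
From mathcomp Require Import all_classical all_reals all_analysis.
From mathcomp Require Import measurable_realfun complex.
Set Implicit Arguments. Unset Strict Implicit. Unset Printing Implicit Defensive.
Import Order.TTheory GRing.Theory Num.Theory.
Local Open Scope classical_set_scope.
Local Open Scope ring_scope.

(* Young function phi : [0,oo) -> [0,oo) (given as a function R -> R,
   only its values on [0,oo) matter). *)
Definition young_function (R : realType) (phi : R -> R) : Prop :=
  [/\ (forall x, 0 <= x -> 0 <= phi x),
      (forall x y l, 0 <= x -> 0 <= y -> 0 <= l <= 1 ->
         phi (l * x + (1 - l) * y) <= l * phi x + (1 - l) * phi y),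
      (forall x, 0 <= x -> (phi x = 0 <-> x = 0)) &
      phi x @[x --> +oo] --> +oo].

Definition delta2 (R : realType) (phi : R -> R) : Prop :=
  exists2 k : R, 0 < k & forall x, 0 < x -> phi (2 * x) <= k * phi x.

Definition weight_function (R : realType) (w : R -> R) : Prop :=
  [/\ (forall s t, 0 < s -> s <= t -> w t <= w s),
      (forall t, 0 < t -> 0 < w t),
      (forall t, 0 < t ->
         (@lebesgue_measure R).-integrable `]0%R, t] (fun x => (w x)%:E)) &
      (\int[@lebesgue_measure R]_(x in `]0%R, +oo[) (w x)%:E = +oo)%E].

Definition cmod (R : realType) (z : R[i]) : R :=
  Num.sqrt (complex.Re z ^+ 2 + complex.Im z ^+ 2).

Definition cmeasurable d (T : measurableType d) (R : realType)
  (f : T -> R[i]) : Prop :=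
  measurable_fun setT (fun x => complex.Re (f x)) /\
  measurable_fun setT (fun x => complex.Im (f x)).

Definition distrib d (T : measurableType d) (R : realType)
  (nu : {measure set T -> \bar R}) (f : T -> R[i]) (s : R) : \bar R :=
  nu [set x | s < cmod (f x)].

Definition rearr d (T : measurableType d) (R : realType)
  (nu : {measure set T -> \bar R}) (f : T -> R[i]) (t : R) : \bar R :=
  ereal_inf [set (s%:E)%E | s in [set s : R | 0 < s /\ (distrib nu f s <= t%:E)%E]].

Definition in_OL d (T : measurableType d) (R : realType)
  (nu : {measure set T -> \bar R}) (phi w : R -> R) (f : T -> R[i]) : Prop :=
  cmeasurable f /\
  exists2 a : R, 0 < a &
    (forall t, 0 < t -> (rearr nu f t < +oo)%E) /\
    (\int[@lebesgue_measure R]_(t in `]0%R, +oo[)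
        (phi (a * fine (rearr nu f t)) * w t)%:E < +oo)%E.

(* range of (C_Psi)^m on L_(phi,w), where (C_Psi)^m f = f o Psi^m;
   elements of L_(phi,w) are identified up to nu-a.e. equality *)
Definition comp_range d (T : measurableType d) (R : realType)
  (nu : {measure set T -> \bar R}) (phi w : R -> R) (Psi : T -> T) (m : nat)
  : set (T -> R[i]) :=
  [set g | in_OL nu phi w g /\
     exists2 f, in_OL nu phi w f &
       {ae nu, forall x, f (iter m Psi x) = g x}].

Definition has_descent (X : Type) (Rg : nat -> set X) (m : nat) : Prop :=
  Rg m.+1 = Rg m /\ forall k, (k < m)%N -> Rg k.+1 <> Rg k.

(** Since Psi^-1(E) = E, every measurable g factors as g = h o Psi with h
    measurable (Doob-Dynkin, through the rational sublevel sets of g).  Let f be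
    h on the support Z of f_Psi and 0 elsewhere.  Then f o Psi = g a.e., since
    nu(Psi^-1(E \ Z)) is the integral of f_Psi over E \ Z, i.e. 0; and f_Psi >= eps
    on Z gives eps nu_f(s) <= nu(Psi^-1 {|h| > s}) = nu_g(s).  Hence
    f^*(t) <= g^*(e t) with e = min(eps, 1), and the substitution t -> e t in the
    Orlicz-Lorentz modular, with phi nondecreasing and w nonincreasing, puts f in L_(phi,w).
    So C_Psi is onto: R(C_Psi) = R(I), and the descent is 0. *)

From HB Require Import structures.
From mathcomp Require Import all_boot all_order all_algebra.
From mathcomp Require Import all_classical all_reals all_analysis.
From mathcomp Require Import measurable_realfun complex.
Import Order.TTheory GRing.Theory Num.Theory.
Local Open Scope classical_set_scope.
Local Open Scope ring_scope.

Section positive_halfline.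
Context {R : realType}.
Implicit Types (phi w f g : R -> R) (c : R).

Lemma le_young phi x y : young_function phi -> 0 <= x -> x <= y -> phi x <= phi y.
Proof.
case=> phi_ge0 phi_convex phi_eq0 _ x0 xy.
have phi0 : phi 0 = 0 by apply/phi_eq0.
have y0 : 0 <= y := le_trans x0 xy.
have [y0E|yn0] := eqVneq y 0.
  by have -> : x = y by apply/le_anti; rewrite xy y0E x0.
have y_gt0 : 0 < y by rewrite lt_def yn0 y0.
have := phi_convex y 0 (x / y) y0 (lexx 0).
rewrite divr_ge0 ?ler_pdivrMr ?mul1r // xy => /(_ isT).
rewrite phi0 !mulr0 !addr0 mulrAC -mulrA divff ?mulr1 // => /le_trans; apply.
by rewrite -[leRHS]mul1r ler_wpM2r ?phi_ge0 // ler_pdivrMr ?mul1r.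
Qed.

Definition nonincreasing_pos f := forall s t, 0 < s -> s <= t -> f t <= f s.

Lemma nonincreasing_pos_measurable {f} :
  nonincreasing_pos f -> measurable_fun (`]0, +oo[ : set R) f.
Proof.
move=> f_ni; apply: (measurability (@RGenCInfty.G R)) => [|/= _ [_] [r] -> <-].
  exact: RGenCInfty.measurableE.
apply: is_interval_measurable => s t /= [+ fs] [+ ft] u /andP[su ut].
rewrite !in_itv /= !andbT => s0 t0; have u0 := lt_le_trans s0 su.
split=> //; move: ft; rewrite in_itv /= andbT => /le_trans; apply; exact: f_ni.
Qed.

Lemma measurable_EFin_nonincreasing_pos f : nonincreasing_pos f ->
  measurable_fun (`]0, +oo[ : set R) (fun t => (f t)%:E).
Proof. by move=> f_ni; apply/measurable_EFinP; exact: nonincreasing_pos_measurable. Qed.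

Lemma nonincreasing_posM f g :
  (forall t, 0 < t -> 0 <= f t) -> (forall t, 0 < t -> 0 <= g t) ->
  nonincreasing_pos f -> nonincreasing_pos g ->
  nonincreasing_pos (fun t => f t * g t).
Proof.
move=> f0 g0 f_ni g_ni s t s0 st; have t0 := lt_le_trans s0 st.
by rewrite ler_pM ?f0 ?g0 ?f_ni ?g_ni.
Qed.

Lemma nonincreasing_pos_dilate f c : 0 < c ->
  nonincreasing_pos f -> nonincreasing_pos (fun t => f (c * t)).
Proof. by move=> c0 f_ni s t s0 st; rewrite f_ni ?mulr_gt0 ?ler_pM2l. Qed.

Lemma nonincreasing_pos_young phi f : young_function phi ->
  (forall t, 0 < t -> 0 <= f t) -> nonincreasing_pos f ->
  nonincreasing_pos (fun t => phi (f t)).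
Proof.
move=> yphi f0 f_ni s t s0 st.
by rewrite le_young ?f0 ?f_ni // (lt_le_trans s0 st).
Qed.

Local Open Scope ereal_scope.

Lemma ge0_integral_dilate {c f} : (0 < c)%R ->
  measurable_fun (`]0%R, +oo[ : set R) f -> (forall t, 0 < t -> 0 <= f t)%R ->
  c%:E * \int[lebesgue_measure]_(t in `]0%R, +oo[) (f (c * t))%:E =
  \int[lebesgue_measure]_(u in `]0%R, +oo[) (f u)%:E.
Proof.
move=> c0 mf f0.
pose dil t := (c * t)%R.
have mdil : @measurable_fun _ _ (measurableTypeR R) (measurableTypeR R) setT dil.
  exact: mulrl_measurable.
have f0' : {in `]0%R, +oo[%classic, forall u, 0 <= (f u)%:E}.
  by move=> u; rewrite inE /= in_itv /= andbT lee_fin => /f0.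
have dil_pos : dil @^-1` `]0%R, +oo[%classic = `]0%R, +oo[%classic.
  by apply/seteqP; split => t /=; rewrite !in_itv /= !andbT pmulr_rgt0.
have := ge0_integral_pushforward mdil (@lebesgue_measure R) (measurable_itv _)
  ((measurable_EFinP _ _).2 mf) f0'.
rewrite dil_pos => <-.
have -> : c%:E = (NngNum (ltW c0))%:num%:E by [].
rewrite -ge0_integral_mscale //; last 2 first.
- exact/measurable_EFinP.
- by move=> u /=; rewrite in_itv /= andbT lee_fin => /f0.
apply: eq_measure_integral => A mA _; apply/esym.
apply: (lebesgue_measure_unique _ mA) => _ [[x y] _ <-] /=.
rewrite /mscale /pushforward /=.
have dil_itv : dil @^-1` `]x, y]%classic = `](x / c)%R, (y / c)%R]%classic.
  apply/seteqP; split => t;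
  by rewrite /= !in_itv /= ltr_pdivrMr // ler_pdivlMr // ![(t * c)%R]mulrC.
rewrite [X in _ = _ * X](_ : _ = lebesgue_measure `](x / c)%R, (y / c)%R]%classic).
  rewrite !lebesgue_measure_itv /= !lte_fin ltr_pM2r ?invr_gt0 //.
  case: ifP => _; last by rewrite mule0.
  by rewrite -EFinM -!EFinD -mulrBl mulrCA divff ?mulr1 ?gt_eqF.
by rewrite /pushforward dil_itv.
Qed.

Definition OL_modular phi w f : \bar R :=
  \int[@lebesgue_measure R]_(t in `]0%R, +oo[) (phi (f t) * w t)%:E.

Lemma le_OL_modular_dilate {phi w f g c} :
  young_function phi -> weight_function w -> (0 < c <= 1)%R ->
  (forall t, 0 < t -> 0 <= f t)%R -> nonincreasing_pos f -> nonincreasing_pos g ->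
  (forall t, 0 < t -> f t <= g (c * t))%R ->
  c%:E * OL_modular phi w f <= OL_modular phi w g.
Proof.
move=> yphi [w_ni w_gt0 _ _] /andP[c0 c1] f0 f_ni g_ni fg.
have phi0 x : (0 <= x -> 0 <= phi x)%R by case: yphi => + _ _ _; apply.
have w0 t : (0 < t -> 0 <= w t)%R by move/w_gt0/ltW.
have g0 t : (0 < t -> 0 <= g t)%R.
  move=> t0; have := fg (t / c)%R (divr_gt0 t0 c0).
  by rewrite (mulrC c) divfK ?gt_eqF //; apply/le_trans/f0/divr_gt0.
pose h u := (phi (g u) * w u)%R.
have h0 t : (0 < t -> 0 <= h t)%R by move=> t0; rewrite mulr_ge0 ?phi0 ?g0 ?w0.
have h_ni : nonincreasing_pos h.
  apply: nonincreasing_posM => // [t t0|]; first by rewrite phi0 ?g0.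
  exact: nonincreasing_pos_young.
rewrite /OL_modular -(ge0_integral_dilate c0 (nonincreasing_pos_measurable h_ni) h0).
rewrite lee_wpmul2l ?lee_fin ?(ltW c0) //.
apply: ge0_le_integral => //.
- by move=> t /=; rewrite in_itv /= andbT lee_fin => t0; rewrite mulr_ge0 ?phi0 ?f0 ?w0.
- apply: measurable_EFin_nonincreasing_pos; apply: nonincreasing_posM => //.
    by move=> t t0; rewrite phi0 ?f0.
  exact: nonincreasing_pos_young.
- by apply: measurable_EFin_nonincreasing_pos; exact: nonincreasing_pos_dilate.
move=> t /=; rewrite in_itv /= andbT lee_fin => t0; have ct0 := mulr_gt0 c0 t0.
apply: ler_pM; rewrite ?phi0 ?f0 ?w0 //; first by rewrite le_young ?f0 ?fg.
by rewrite w_ni // ger_pMl.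
Qed.

End positive_halfline.

Section rearrangement.
Context {d} {T : measurableType d} {R : realType} (nu : {measure set T -> \bar R}).
Implicit Types (f g : T -> R[i]) (s t : R).
Local Open Scope ereal_scope.

Lemma rearr_ge0 f t : 0 <= rearr nu f t.
Proof. by apply: le_ereal_inf_tmp => _ [s [s0 _] <-]; rewrite lee_fin ltW. Qed.

Lemma le_rearr f s t : (s <= t)%R -> rearr nu f t <= rearr nu f s.
Proof.
move=> st; apply: ereal_inf_le_tmp => _ [u [u0 fu] <-]; exists u => //.
by split=> //; apply: le_trans fu _; rewrite lee_fin.
Qed.

Lemma rearr_nonincreasing_pos f a : (0 <= a)%R ->
  (forall t, (0 < t)%R -> rearr nu f t < +oo) ->
  nonincreasing_pos (fun t => a * fine (rearr nu f t))%R.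
Proof.
move=> a0 f_fin s t s0 st; rewrite ler_wpM2l // fine_le ?le_rearr //.
- by rewrite ge0_fin_numE ?rearr_ge0 ?f_fin ?(lt_le_trans s0).
- by rewrite ge0_fin_numE ?rearr_ge0 ?f_fin.
Qed.

Lemma le_rearr_dilate f g c : (0 < c)%R ->
  (forall s, (0 < s)%R -> c%:E * distrib nu f s <= distrib nu g s) ->
  forall t, rearr nu f t <= rearr nu g (c * t).
Proof.
move=> c0 fg t; apply: ereal_inf_le_tmp => _ [s [s0 gs] <-].
exists s => //; split=> //; rewrite -(@lee_pmul2l _ c%:E) ?lte_fin //.
by rewrite (le_trans (fg s s0)) // (le_trans gs) // EFinM.
Qed.

Lemma in_OL_of_distrib_le {phi w : R -> R} {f g c} :
  young_function phi -> weight_function w -> (0 < c)%R -> cmeasurable f ->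
  (forall s, (0 < s)%R -> c%:E * distrib nu f s <= distrib nu g s) ->
  in_OL nu phi w g -> in_OL nu phi w f.
Proof.
move=> yphi wf c0 mf fg [_ [a a0 [g_fin g_mod]]].
split; first exact: mf.
exists a; first exact: a0.
pose e := Num.min c 1%R.
have e_itv : (0 < e <= 1)%R by rewrite lt_min c0 ltr01 ge_min lexx orbT.
have e0 : (0 < e)%R by case/andP: e_itv.
have f_le t : rearr nu f t <= rearr nu g (e * t).
  apply: le_rearr_dilate => // s s0; apply: le_trans (fg s s0).
  by rewrite lee_wpmul2r ?measure_ge0 // lee_fin ge_min lexx.
have f_fin t : (0 < t)%R -> rearr nu f t < +oo.
  by move=> t0; rewrite (le_lt_trans (f_le t)) ?g_fin ?mulr_gt0.
split; first exact: f_fin.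
have f0 t : (0 < t)%R -> (0 <= a * fine (rearr nu f t))%R.
  by move=> _; rewrite mulr_ge0 ?(ltW a0) ?fine_ge0 ?rearr_ge0.
have fg_fine t : (0 < t)%R ->
    (a * fine (rearr nu f t) <= a * fine (rearr nu g (e * t)))%R.
  move=> t0; rewrite ler_pM2l // fine_le ?f_le //.
  - by rewrite ge0_fin_numE ?rearr_ge0 ?f_fin.
  - by rewrite ge0_fin_numE ?rearr_ge0 ?g_fin ?mulr_gt0.
have := le_OL_modular_dilate yphi wf e_itv f0
  (rearr_nonincreasing_pos _ _ (ltW a0) f_fin)
  (rearr_nonincreasing_pos _ _ (ltW a0) g_fin) fg_fine.
rewrite /OL_modular /= => /le_lt_trans/(_ g_mod).
by case: (\int[_]_(_ in _) _) => [r| |] //=; rewrite ?ltry // gt0_muley ?lte_fin.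
Qed.

End rearrangement.

Section factorization.
Context {d d'} {T : measurableType d} {U : measurableType d'} {R : realType}.
Local Open Scope ereal_scope.

Definition rat_inf (S : rat -> set U) (y : U) : \bar R :=
  ereal_inf [set (ratr q)%:E | q in [set q | S q y]].

Lemma measurable_rat_inf (S : rat -> set U) :
  (forall q, measurable (S q)) -> measurable_fun setT (rat_inf S).
Proof.
move=> mS; apply: (measurability _ (ErealGenInftyO.measurableE R)).
move=> _ /= -[_ [r ->] <-].
have -> : setT `&` rat_inf S @^-1` `]-oo, r%:E[ =
    \bigcup_q (S q `&` [set _ | (ratr q < r)%R]).
  apply/seteqP; split => y /=.
    rewrite in_itv /= => -[_] /ereal_inf_lt[_ [q Sq <-]].
    by rewrite lte_fin => qr; exists q.
  move=> [q _ [Sq qr]]; split => //; rewrite in_itv /=.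
  apply: le_lt_trans (ereal_inf_lbound _) _; first by exists q.
  by rewrite lte_fin.
apply: bigcupT_measurable_rat => q; apply: measurableI => //.
by case: (boolP (ratr q < r)%R) => qr;
  [rewrite (_ : [set _ | _] = setT) | rewrite (_ : [set _ | _] = set0)] => //;
  apply/seteqP; split => //= _ /negP.
Qed.

Lemma measurable_factorization {Psi : T -> U} {u : T -> R} :
  (forall A, measurable A -> exists2 S, measurable S & Psi @^-1` S = A) ->
  measurable_fun setT u ->
  exists2 h : U -> R, measurable_fun setT h & forall x, h (Psi x) = u x.
Proof.
move=> Psi_onto mu.
have sublevel q : exists S,
    measurable S /\ Psi @^-1` S = [set x | (u x < ratr q)%R].
  have [|S mS SE] := Psi_onto [set x | (u x < ratr q)%R]; last by exists S.
  rewrite -[X in measurable X]setTI.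
  have -> : [set x | (u x < ratr q)%R] = u @^-1` `]-oo, ratr q[.
    by apply/seteqP; split => x /=; rewrite in_itv.
  exact: mu.
have [S SE] := choice sublevel.
have inS q x : S q (Psi x) <-> (u x < ratr q)%R.
  by have /= := congr1 (fun A => A x) (SE q).2 => ->.
have infE x : rat_inf S (Psi x) = (u x)%:E.
  apply/eqP; rewrite eq_le; apply/andP; split; last first.
    by apply: le_ereal_inf_tmp => _ [q /inS/ltW ? <-]; rewrite lee_fin.
  apply/lee_addgt0Pr => e e0.
  have [q] := @rat_in_itvoo R (u x) (u x + e) ltac:(by rewrite ltrDl).
  rewrite in_itv /= => /andP[uq qe].
  apply: le_trans (ereal_inf_lbound _) _; first by exists q => //; apply/inS.
  by rewrite -EFinD lee_fin ltW.
exists (fine \o rat_inf S); last by move=> x /=; rewrite infE.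
apply: measurableT_comp; first exact: (fine_measurable measurableT).
by apply: measurable_rat_inf => q; case: (SE q).
Qed.

Lemma cmeasurable_factorization {Psi : T -> U} {g : T -> R[i]} :
  (forall A, measurable A -> exists2 S, measurable S & Psi @^-1` S = A) ->
  cmeasurable g -> exists2 h : U -> R[i], cmeasurable h & h \o Psi = g.
Proof.
move=> Psi_onto [mRe mIm].
have [h1 mh1 h1E] := measurable_factorization Psi_onto mRe.
have [h2 mh2 h2E] := measurable_factorization Psi_onto mIm.
exists (fun y => Complex (h1 y) (h2 y)); first by split.
by apply/funext => x /=; rewrite h1E h2E; case: (g x).
Qed.

End factorization.

Section complex_measurable.
Context {d} {T : measurableType d} {R : realType}.
Implicit Types h : T -> R[i].

Lemma cmod0 : cmod (0 : R[i]) = 0.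
Proof. by rewrite /cmod /= expr0n addr0 sqrtr0. Qed.

Lemma measurable_cmod h : cmeasurable h -> measurable_fun setT (fun x => cmod (h x)).
Proof.
move=> [mRe mIm].
apply: measurableT_comp (continuous_measurable_fun (@sqrt_continuous R)) _.
by apply: measurable_funD; exact: measurable_funX.
Qed.

Lemma cmeasurable_patch0 (Z : set T) h : measurable Z -> cmeasurable h ->
  cmeasurable (patch (fun=> 0) Z h).
Proof.
move=> mZ [mRe mIm].
have patchE (k : R[i] -> R) : k 0 = 0 ->
    (fun x => k (patch (fun=> 0) Z h x)) = (fun x => k (h x) * \1_Z x).
  move=> k0; apply/funext => x; rewrite /patch indicE.
  by case: (x \in Z); rewrite ?mulr1 ?mulr0.
by split; rewrite patchE //; apply: measurable_funM => //; exact: measurable_indic.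
Qed.

End complex_measurable.

Section surjective_composition.
Context {d} {T : measurableType d} {R : realType} (nu : {measure set T -> \bar R}).
Context {Psi : T -> T} {fPsi : T -> \bar R}.
Hypotheses (mPsi : measurable_fun setT Psi) (mfPsi : measurable_fun setT fPsi).
Hypothesis fPsi_ge0 : forall x, (0 <= fPsi x)%E.
Hypothesis nuPsiE : forall S, measurable S ->
  nu (Psi @^-1` S) = (\int[nu]_(x in S) fPsi x)%E.
Local Open Scope ereal_scope.

Let supp := [set x | fPsi x != 0].

Let measurable_supp : measurable supp.
Proof. by rewrite -[supp]setTI; exact: emeasurable_neq. Qed.

Let measurable_preimage S : measurable S -> measurable (Psi @^-1` S).
Proof. by move=> mS; rewrite -[X in measurable X]setTI; exact: mPsi. Qed.

Lemma preimage_supp_compl_null : nu (Psi @^-1` ~` supp) = 0.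
Proof.
rewrite nuPsiE; last exact: measurableC.
by apply: integral0_eq => y /= /negP; rewrite negbK => /eqP.
Qed.

Lemma patch_supp_comp_ae (h : T -> R[i]) :
  {ae nu, forall x, patch (fun=> 0%R) supp h (Psi x) = h (Psi x)}.
Proof.
exists (Psi @^-1` ~` supp); split.
- exact/measurable_preimage/measurableC.
- exact: preimage_supp_compl_null.
by move=> x /= + Psix; apply; rewrite /patch mem_set.
Qed.

Context {eps : R}.
Hypothesis eps_gt0 : (0 < eps)%R.
Hypothesis fPsi_ge_eps : {ae nu, forall x, fPsi x != 0 -> eps%:E <= fPsi x}.

Lemma le_measure_preimage_supp B : measurable B ->
  eps%:E * nu (B `&` supp) <= nu (Psi @^-1` B).
Proof.
move=> mB; have mBZ := measurableI _ _ mB measurable_supp.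
apply: (@le_trans _ _ (nu (Psi @^-1` (B `&` supp)))); last first.
  by apply: le_measure; rewrite ?inE; [exact: measurable_preimage..|move=> x []].
rewrite nuPsiE // -(integral_cst nu mBZ).
apply: ae_ge0_le_integral => //.
- by move=> x _; rewrite lee_fin ltW.
- exact: measurable_funS mfPsi.
by apply: filterS fPsi_ge_eps => x + [_ Zx]; apply.
Qed.

Lemma distrib_patch_supp (h : T -> R[i]) s : (0 <= s)%R -> cmeasurable h ->
  eps%:E * distrib nu (patch (fun=> 0%R) supp h) s <= distrib nu (h \o Psi) s.
Proof.
move=> s0 mh; pose A := [set y | (s < cmod (h y))%R].
have mA : measurable A.
  rewrite -[A]setTI (_ : A = (fun y => cmod (h y)) @^-1` `]s, +oo[).
    exact: measurable_cmod.
  by apply/seteqP; split => y; rewrite /= in_itv /= andbT.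
have -> : distrib nu (patch (fun=> 0%R) supp h) s = nu (A `&` supp).
  congr (nu _); apply/seteqP; split => y; rewrite /patch /=;
    case: (boolP (y \in supp)) => [/set_mem Zy|/negP Zy] //.
  - by rewrite cmod0 => /(le_lt_trans s0); rewrite ltxx.
  - by case.
  - by move=> [_ /mem_set].
exact: le_measure_preimage_supp.
Qed.

Context {phi w : R -> R}.
Hypotheses (yphi : young_function phi) (wf : weight_function w).

Lemma in_OL_patch_supp (h : T -> R[i]) : cmeasurable h ->
  in_OL nu phi w (h \o Psi) -> in_OL nu phi w (patch (fun=> 0%R) supp h).
Proof.
move=> mh; apply: (in_OL_of_distrib_le nu yphi wf eps_gt0).
  exact: cmeasurable_patch0.
by move=> s s0; apply: distrib_patch_supp => //; exact: ltW.
Qed.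

End surjective_composition.

Theorem theorem4p1 (d : measure_display) (T : measurableType d) (R : realType)
  (nu : {measure set T -> \bar R}) (phi w : R -> R) (Psi : T -> T)
  (fPsi : T -> \bar R) :
  sigma_finite setT nu ->
  young_function phi -> delta2 phi -> weight_function w ->
  measurable_fun setT Psi ->
  (forall S, measurable S -> nu S = 0%E -> nu (Psi @^-1` S) = 0%E) ->
  (* C_Psi is a well-defined operator on L_(phi,w) *)
  (forall f, in_OL nu phi w f -> in_OL nu phi w (f \o Psi)) ->
  (* fPsi is the Radon-Nikodym derivative d(nu o Psi^-1)/d nu *)
  measurable_fun [set: T] fPsi -> (forall x, (0 <= fPsi x)%E) ->
  (forall S, measurable S ->
     nu (Psi @^-1` S) = (\int[nu]_(x in S) fPsi x)%E) ->
  (* fPsi bounded away from zero on its support *)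
  (exists2 eps : R, 0 < eps &
     {ae nu, forall x, fPsi x != 0%E -> (eps%:E <= fPsi x)%E}) ->
  (* Psi^-1(E) = E *)
  [set Psi @^-1` S | S in [set S : set T | measurable S]] =
    [set A : set T | measurable A] ->
  has_descent (comp_range nu phi w Psi) 0.
Proof.
move=> _ yphi _ wf mPsi _ _ mfPsi fPsi0 nuPsiE [eps eps0 fPsi_ge] PsiE.
have Psi_onto A : measurable A -> exists2 S, measurable S & Psi @^-1` S = A.
  by move=> mA; have : [set A | measurable A] A by []; rewrite -PsiE => -[S]; exists S.
split=> [|[]//]; apply/seteqP; split=> g [OLg _]; split=> //.
  by exists g => //; exact: aeW.
have [h mh hPsi] := cmeasurable_factorization Psi_onto OLg.1.
rewrite -hPsi in OLg *.
exists (patch (fun=> 0) [set x | fPsi x != 0%E] h).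
  exact: (in_OL_patch_supp nu mPsi mfPsi fPsi0 nuPsiE eps0 fPsi_ge yphi wf h mh).
exact: (patch_supp_comp_ae nu mPsi mfPsi nuPsiE).
Qed.
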